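(* Let $g\in\mathcal{G}$. Then $g$ is predictable if and only if for every sub-polynomial function $\epsilon>0$ there exists a sub-polynomial function $h$ such that for all $x\in\mathbb{N}$ and all $y\in[1,x/h(x))$ satisfying $x+y\notin\delta_{\epsilon(x)}(g,x)$ it holds that $g(y)\ge g(x)/h(x)$.
   Context: $\mathcal{G}=\{g:\mathbb{Z}_{\ge0}\to\mathbb{R}: g(0)=0,\ g(1)=1,\ g(x)>0\ \forall x>0\}$. A function $f:\mathbb{R}_{\ge0}\to\mathbb{R}_{\ge0}$ is sub-polynomial if for every $\alpha>0$, $\lim_{x\to\infty}x^\alpha f(x)=\infty$ and $\lim_{x\to\infty}x^{-\alpha}f(x)=0$. For $x\in\mathbb{N}$ and $\epsilon>0$ let $\delta_\epsilon(g,x)=\{y\in\mathbb{N}: |g(y)-g(x)|\le\epsilon g(x)\}$. $g$ is predictable if for every $0<\gamma<1$ and every sub-polynomial $\epsilon$ there is $N$ such that for all $x\ge N$ and all $y\in[1,x^{1-\gamma})$ with $x+y\notin\delta_{\epsilon(x)}(g,x)$ we have $g(y)\ge x^{-\gamma}g(x)$. *)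

From Stdlib Require Export Reals.
Open Scope R_scope.

Definition in_G (g : nat -> R) : Prop :=
  g 0%nat = 0 /\ g 1%nat = 1 /\ forall x : nat, (0 < x)%nat -> 0 < g x.

(* f : R_{>=0} -> R_{>=0} (modelled on R, nonnegative on [0,oo)) is
   sub-polynomial: for every alpha > 0, x^alpha f(x) -> +oo and
   x^(-alpha) f(x) -> 0 as x -> +oo. *)
Definition sub_polynomial (f : R -> R) : Prop :=
  (forall x, 0 <= x -> 0 <= f x) /\
  forall alpha : R, 0 < alpha ->
    (forall M : R, exists N : R, forall x : R, N <= x -> M < Rpower x alpha * f x) /\
    (forall e : R, 0 < e -> exists N : R, forall x : R, N <= x ->
        Rabs (Rpower x (- alpha) * f x) < e).

Definition delta (eps : R) (g : nat -> R) (x : nat) : nat -> Prop :=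
  fun y => Rabs (g y - g x) <= eps * g x.

Definition predictable (g : nat -> R) : Prop :=
  forall gamma : R, 0 < gamma < 1 ->
  forall eps : R -> R, sub_polynomial eps ->
  exists N : nat, forall x : nat, (N <= x)%nat ->
  forall y : nat, (1 <= y)%nat -> INR y < Rpower (INR x) (1 - gamma) ->
    ~ delta (eps (INR x)) g x (x + y)%nat ->
    g y >= Rpower (INR x) (- gamma) * g x.

From Stdlib Require Import Reals ZArith Lra Lia IndefiniteDescription.
Open Scope R_scope.

(* For the forward direction, apply predictability with the exponents
   gamma_k = 1/(k+2), obtaining thresholds N_k, and let h(x) = x^gamma_k for
   the largest k with N_k + k <= x; then k -> oo with x, so h is
   sub-polynomial, and y < x/h(x) = x^(1-gamma_k) is exactly the range where
   predictability gives g(y) >= x^(-gamma_k) g(x) = g(x)/h(x).  Conversely,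
   a sub-polynomial h is eventually below x^gamma, so the range
   y < x^(1-gamma) is contained in y < x/h(x) and g(x)/h(x) >= x^(-gamma) g(x). *)

Definition uniformly_predictable (g : nat -> R) : Prop :=
  forall eps : R -> R, sub_polynomial eps -> (forall t, 0 < t -> 0 < eps t) ->
  exists h : R -> R, sub_polynomial h /\ (forall t, 0 < t -> 0 < h t) /\
    forall x y : nat, (1 <= y)%nat -> INR y < INR x / h (INR x) ->
      ~ delta (eps (INR x)) g x (x + y)%nat -> g y >= g x / h (INR x).

Lemma Rpower_gt_0 (t a : R) : 0 < Rpower t a.
Proof. exact (exp_pos _). Qed.

Lemma Rpower_ge_1 (t a : R) : 1 <= t -> 0 <= a -> 1 <= Rpower t a.
Proof. intros Ht Ha. rewrite <- (Rpower_O t) by lra. now apply Rle_Rpower. Qed.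

Lemma Rpower_1_minus (x a : R) : 0 < x -> Rpower x (1 - a) = x / Rpower x a.
Proof. intros Hx. unfold Rminus. now rewrite Rpower_plus, Rpower_1, Rpower_Ropp. Qed.

Lemma Rpower_eventually_gt (b B : R) :
  0 < b -> exists T, 1 <= T /\ forall t, T <= t -> B < Rpower t b.
Proof.
  intros Hb. pose proof (Rle_abs B) as HB. pose proof (Rabs_pos B).
  set (T := Rpower (Rabs B + 1) (/ b)).
  assert (HT1 : 1 <= T) by (apply Rpower_ge_1; [lra | left; now apply Rinv_0_lt_compat]).
  exists T. split; [exact HT1|]. intros t Ht.
  assert (HTb : Rpower T b = Rabs B + 1).
  { unfold T. rewrite Rpower_mult, Rinv_l, Rpower_1 by lra. reflexivity. }
  assert (Rpower T b <= Rpower t b) by (apply Rle_Rpower_l; lra).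
  lra.
Qed.

Lemma Rpower_eventually_lt (b e : R) :
  0 < b -> 0 < e -> exists T, 1 <= T /\ forall t, T <= t -> Rpower t (- b) < e.
Proof.
  intros Hb He. destruct (Rpower_eventually_gt b (/ e) Hb) as [T [HT1 HT]].
  exists T. split; [exact HT1|]. intros t Ht.
  rewrite Rpower_Ropp, <- (Rinv_inv e).
  apply Rinv_lt_contravar; [|exact (HT t Ht)].
  apply Rmult_lt_0_compat; [now apply Rinv_0_lt_compat | apply Rpower_gt_0].
Qed.

Lemma nat_le_Int_part (t : R) (m : nat) : INR m <= t -> (m <= Z.to_nat (Int_part t))%nat.
Proof.
  intros Ht. destruct (base_Int_part t) as [_ Hfl]. rewrite INR_IZR_INZ in Ht.
  assert (Z.of_nat m < Int_part t + 1)%Z by (apply lt_IZR; rewrite plus_IZR; simpl; lra).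
  lia.
Qed.

Lemma sub_polynomial_of_bounds (h : R -> R) :
  (forall t, 0 <= t -> 0 <= h t) ->
  (exists T, forall t, T <= t -> 1 <= h t) ->
  (forall c, 0 < c -> exists T, forall t, T <= t -> h t <= Rpower t c) ->
  sub_polynomial h.
Proof.
  intros Hnn [T1 Hlow] Hup. split; [exact Hnn|]. intros a Ha. split.
  - intros M. destruct (Rpower_eventually_gt a M Ha) as [T [_ HT]].
    exists (Rmax T T1). intros t Ht.
    pose proof (Rmax_l T T1). pose proof (Rmax_r T T1).
    specialize (HT t ltac:(lra)). specialize (Hlow t ltac:(lra)).
    pose proof (Rpower_gt_0 t a). nra.
  - intros e He. destruct (Hup (a / 2) ltac:(lra)) as [T2 HT2].
    destruct (Rpower_eventually_lt (a / 2) e ltac:(lra) He) as [T [HT1 HT]].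
    exists (Rmax T (Rmax T1 T2)). intros t Ht.
    pose proof (Rmax_l T (Rmax T1 T2)). pose proof (Rmax_r T (Rmax T1 T2)).
    pose proof (Rmax_l T1 T2). pose proof (Rmax_r T1 T2).
    specialize (HT t ltac:(lra)). specialize (Hlow t ltac:(lra)).
    specialize (HT2 t ltac:(lra)). pose proof (Rpower_gt_0 t (- a)).
    rewrite Rabs_pos_eq by nra.
    replace (- (a / 2)) with (- a + a / 2) in HT by field.
    rewrite Rpower_plus in HT. nra.
Qed.

Lemma sub_polynomial_eventually_lt_Rpower (f : R -> R) (c : R) :
  sub_polynomial f -> 0 < c -> exists T, forall t, T <= t -> f t < Rpower t c.
Proof.
  intros [_ Hf] Hc. destruct (proj2 (Hf c Hc) 1 Rlt_0_1) as [T HT].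
  exists T. intros t Ht. specialize (HT t Ht).
  pose proof (Rle_abs (Rpower t (- c) * f t)).
  rewrite Rpower_Ropp in *. pose proof (Rpower_gt_0 t c).
  apply (Rmult_lt_reg_l (/ Rpower t c)); [now apply Rinv_0_lt_compat|].
  rewrite Rinv_l by lra. lra.
Qed.

Lemma sub_polynomial_eventually_pos (f : R -> R) :
  sub_polynomial f -> exists T, forall t, T <= t -> 0 < f t.
Proof.
  intros [_ Hf]. destruct (proj1 (Hf 1 Rlt_0_1) 0) as [T HT].
  exists T. intros t Ht. specialize (HT t Ht). pose proof (Rpower_gt_0 t 1).
  destruct (Rlt_le_dec 0 (f t)) as [|Hle]; [assumption|]. nra.
Qed.

Lemma sub_polynomial_eventually_eq (f f' : R -> R) :
  sub_polynomial f -> (forall t, 0 <= t -> 0 <= f' t) ->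
  (exists T, forall t, T <= t -> f' t = f t) -> sub_polynomial f'.
Proof.
  intros [_ Hf] Hnn [T Heq]. split; [exact Hnn|]. intros a Ha.
  destruct (Hf a Ha) as [Hbig Hsmall]. split.
  - intros M. destruct (Hbig M) as [N HN]. exists (Rmax N T). intros t Ht.
    pose proof (Rmax_l N T). pose proof (Rmax_r N T).
    rewrite Heq by lra. apply HN; lra.
  - intros e He. destruct (Hsmall e He) as [N HN]. exists (Rmax N T). intros t Ht.
    pose proof (Rmax_l N T). pose proof (Rmax_r N T).
    rewrite Heq by lra. apply HN; lra.
Qed.

Fixpoint last_index_below (M : nat -> nat) (n k : nat) : nat :=
  match k with
  | O => O
  | S j => if (M k <=? n)%nat then k else last_index_below M n j
  end.

Lemma last_index_below_spec (M : nat -> nat) (n k : nat) :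
  last_index_below M n k = O \/ (M (last_index_below M n k) <= n)%nat.
Proof.
  induction k as [|k IH]; simpl; [now left|].
  destruct (Nat.leb_spec (M (S k)) n); [now right | exact IH].
Qed.

Lemma last_index_below_max (M : nat -> nat) (n k j : nat) :
  (j <= k)%nat -> (M j <= n)%nat -> (j <= last_index_below M n k)%nat.
Proof.
  induction k as [|k IH]; intros Hj HM; simpl; [lia|].
  destruct (Nat.leb_spec (M (S k)) n); [lia|].
  assert (j <> S k) by (intros ->; lia). apply IH; lia.
Qed.

Lemma diagonal_index (N : nat -> nat) :
  exists K : nat -> nat,
    (forall n, (N O <= n)%nat -> (N (K n) <= n)%nat) /\
    (forall k, exists n0, forall n, (n0 <= n)%nat -> (k <= K n)%nat).
Proof.
  set (M := fun k => (N k + k)%nat).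
  exists (fun n => last_index_below M n n). split.
  - intros n Hn. destruct (last_index_below_spec M n n) as [-> | HM]; [exact Hn|].
    unfold M in *; lia.
  - intros k. exists (M k). intros n Hn.
    apply last_index_below_max; [unfold M in Hn; lia | exact Hn].
Qed.

Definition gamma_seq (k : nat) : R := / (INR k + 2).

Lemma gamma_seq_bounds (k : nat) : 0 < gamma_seq k < 1.
Proof.
  unfold gamma_seq. pose proof (pos_INR k). split.
  - apply Rinv_0_lt_compat; lra.
  - rewrite <- Rinv_1. apply Rinv_lt_contravar; lra.
Qed.

Lemma gamma_seq_eventually_le (c : R) :
  0 < c -> exists k0, forall k, (k0 <= k)%nat -> gamma_seq k <= c.
Proof.
  intros Hc. destruct (INR_unbounded (/ c)) as [k0 Hk0]. exists k0. intros k Hk.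
  apply le_INR in Hk. unfold gamma_seq.
  rewrite <- (Rinv_inv c). apply Rinv_le_contravar; [now apply Rinv_0_lt_compat | lra].
Qed.

(* Below the cut-off T the value t + 1 makes the range 1 <= y < t / h t empty. *)
Definition diagonal_power (K : nat -> nat) (T t : R) : R :=
  if Rle_dec T t then Rpower t (gamma_seq (K (Z.to_nat (Int_part t)))) else t + 1.

Lemma diagonal_power_sub_polynomial (K : nat -> nat) (T : R) :
  (forall k, exists n0, forall n, (n0 <= n)%nat -> (k <= K n)%nat) ->
  sub_polynomial (diagonal_power K T).
Proof.
  intros HK. unfold diagonal_power. apply sub_polynomial_of_bounds.
  - intros t Ht. destruct (Rle_dec T t); [left; apply Rpower_gt_0 | lra].
  - exists (Rmax T 1). intros t Ht.
    pose proof (Rmax_l T 1). pose proof (Rmax_r T 1).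
    destruct (Rle_dec T t); [|lra].
    apply Rpower_ge_1; [lra | left; apply gamma_seq_bounds].
  - intros c Hc. destruct (gamma_seq_eventually_le c Hc) as [k0 Hk0].
    destruct (HK k0) as [n0 Hn0].
    exists (Rmax (Rmax T 1) (INR n0)). intros t Ht.
    pose proof (Rmax_l (Rmax T 1) (INR n0)). pose proof (Rmax_r (Rmax T 1) (INR n0)).
    pose proof (Rmax_l T 1). pose proof (Rmax_r T 1).
    destruct (Rle_dec T t); [|lra].
    apply Rle_Rpower; [lra|]. apply Hk0, Hn0, nat_le_Int_part. lra.
Qed.

Lemma predictable_uniformly_predictable (g : nat -> R) :
  predictable g -> uniformly_predictable g.
Proof.
  intros Hpred eps Heps _.
  destruct (functional_choice (fun k N => forall x : nat, (N <= x)%nat ->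
    forall y : nat, (1 <= y)%nat -> INR y < Rpower (INR x) (1 - gamma_seq k) ->
    ~ delta (eps (INR x)) g x (x + y)%nat ->
    g y >= Rpower (INR x) (- gamma_seq k) * g x))
    as [N HN].
  { intros k. exact (Hpred _ (gamma_seq_bounds k) eps Heps). }
  destruct (diagonal_index N) as [K [HKN HKoo]].
  exists (diagonal_power K (INR (N O))). split; [|split].
  - exact (diagonal_power_sub_polynomial K _ HKoo).
  - intros t Ht. unfold diagonal_power. destruct (Rle_dec _ t); [apply Rpower_gt_0 | lra].
  - intros x y Hy Hyx Hd. apply (le_INR 1) in Hy. simpl in Hy.
    unfold diagonal_power in *. destruct (Rle_dec _ _) as [Hx | Hx].
    + rewrite Int_part_INR, Nat2Z.id in *. apply INR_le in Hx.
      assert (Hx0 : 0 < INR x).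
      { destruct x as [|x]; [|apply lt_0_INR; lia].
        simpl in Hyx. unfold Rdiv in Hyx. lra. }
      rewrite <- Rpower_1_minus in Hyx by exact Hx0.
      specialize (HN _ x (HKN x Hx) y ltac:(apply INR_le; simpl; lra) Hyx Hd).
      rewrite Rpower_Ropp in HN. unfold Rdiv. lra.
    + pose proof (pos_INR x).
      assert (INR x / (INR x + 1) * (INR x + 1) = INR x) by (field; lra). nra.
Qed.

Lemma uniformly_predictable_predictable (g : nat -> R) :
  (forall x, (0 < x)%nat -> 0 < g x) -> uniformly_predictable g -> predictable g.
Proof.
  intros Hgpos Hu gamma [Hgam0 _] eps Heps.
  destruct (sub_polynomial_eventually_pos eps Heps) as [T0 HT0].
  set (eps' := fun t => if Rlt_dec 0 (eps t) then eps t else 1).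
  assert (Heq : forall t, T0 <= t -> eps' t = eps t).
  { intros t Ht. unfold eps'. destruct (Rlt_dec _ _) as [|C]; [reflexivity|].
    exfalso. exact (C (HT0 t Ht)). }
  assert (Hpos : forall t, 0 < eps' t) by (intros t; unfold eps'; destruct (Rlt_dec _ _); lra).
  assert (Heps' : sub_polynomial eps').
  { apply (sub_polynomial_eventually_eq eps); [exact Heps | | now exists T0].
    intros t _. now left. }
  destruct (Hu eps' Heps' (fun t _ => Hpos t)) as [h [Hh [Hhpos Hbound]]].
  destruct (sub_polynomial_eventually_lt_Rpower h gamma Hh Hgam0) as [T1 HT1].
  destruct (INR_unbounded (Rmax 1 (Rmax T0 T1))) as [N HN].
  pose proof (Rmax_l 1 (Rmax T0 T1)). pose proof (Rmax_r 1 (Rmax T0 T1)).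
  pose proof (Rmax_l T0 T1). pose proof (Rmax_r T0 T1).
  exists N. intros x Hx y Hy Hyx Hd. apply le_INR in Hx.
  set (t := INR x) in *.
  assert (Hgx : 0 < g x) by (apply Hgpos, INR_lt; simpl; fold t; lra).
  assert (Hht : h t < Rpower t gamma) by (apply HT1; lra).
  pose proof (Hhpos t ltac:(lra)). pose proof (Rpower_gt_0 t gamma).
  rewrite Rpower_1_minus in Hyx by lra.
  assert (t / Rpower t gamma < t / h t).
  { unfold Rdiv. apply Rmult_lt_compat_l; [lra|]. apply Rinv_lt_contravar; nra. }
  rewrite <- Heq in Hd by lra.
  specialize (Hbound x y Hy ltac:(fold t; lra) Hd). fold t in Hbound.
  assert (g x / Rpower t gamma <= g x / h t).
  { unfold Rdiv. apply Rmult_le_compat_l; [lra|]. apply Rinv_le_contravar; lra. }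
  rewrite Rpower_Ropp. unfold Rdiv in *. lra.
Qed.

Theorem proposition20 (g : nat -> R) (Hg : in_G g) :
  predictable g <->
  (forall eps : R -> R, sub_polynomial eps -> (forall t, 0 < t -> 0 < eps t) ->
   exists h : R -> R, sub_polynomial h /\ (forall t, 0 < t -> 0 < h t) /\
     forall x : nat, forall y : nat, (1 <= y)%nat -> INR y < INR x / h (INR x) ->
       ~ delta (eps (INR x)) g x (x + y)%nat ->
       g y >= g x / h (INR x)).
Proof.
  destruct Hg as [_ [_ Hgpos]]. split.
  - exact (predictable_uniformly_predictable g).
  - exact (uniformly_predictable_predictable g Hgpos).
Qed.
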